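(* Let $k\geq 0$ and $n\geq k$ be integers, and let $G$ be a $k$-degenerate graph of order $n$. Then $\mu(G)<\mu(S_{n,k})$, unless $G=S_{n,k}$.
   Context: All graphs are finite and simple. A graph $G$ is $k$-degenerate if every subgraph of $G$ contains a vertex of degree at most $k$. $S_{n,k}$ denotes the join of a complete graph of order $k$ and an independent set of order $n-k$ (every vertex of the $K_k$ is adjacent to every other vertex). For a graph $H$, $\mu(H)$ denotes the largest eigenvalue of the adjacency matrix of $H$. *)

From mathcomp Require Import all_boot all_order all_algebra.
From mathcomp Require Import fingroup perm polyrcf.
Set Implicit Arguments. Unset Strict Implicit. Unset Printing Implicit Defensive.
Import Order.TTheory GRing.Theory Num.Theory.

Definition simple_graph (n : nat) (e : rel 'I_n) : Prop :=
  symmetric e /\ irreflexive e.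

(* k-degenerate: every (nonempty) subgraph -- vertex set A, edge relation
   f contained in e -- has a vertex of degree at most k. *)
Definition degenerate (k n : nat) (e : rel 'I_n) : Prop :=
  forall (A : {set 'I_n}) (f : rel 'I_n),
    A != set0 -> subrel f e ->
    exists2 v, v \in A & #|[set u in A | f v u]| <= k.

(* S_{n,k}: vertices 0..k-1 form a clique, joined to every other vertex;
   vertices k..n-1 form an independent set. *)
Definition S_graph (n k : nat) : rel 'I_n :=
  fun i j => (i != j) && ((i < k) || (j < k)).

Arguments S_graph : clear implicits.

Definition graph_iso (n : nat) (e1 e2 : rel 'I_n) : Prop :=
  exists s : {perm 'I_n}, forall x y, e1 x y = e2 (s x) (s y).

Local Open Scope ring_scope.

Definition adj_mx (R : nzRingType) (n : nat) (e : rel 'I_n) : 'M[R]_n :=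
  \matrix_(i, j) (e i j)%:R.

(* largest (real) eigenvalue: the largest root of the characteristic
   polynomial; rootsR lists the real roots in increasing order.
   (For a real symmetric matrix all eigenvalues are real.) *)
Definition mu (R : rcfType) (n : nat) (A : 'M[R]_n) : R :=
  last 0 (rootsR (char_poly A)).

From mathcomp Require Import all_boot all_order all_algebra.
From mathcomp Require Import fingroup perm polyrcf.
From mathcomp Require Import ring lra zify.
Import Order.TTheory GRing.Theory Num.Theory.
Set Implicit Arguments. Unset Strict Implicit. Unset Printing Implicit Defensive.
Local Open Scope ring_scope.

(* For a nonnegative vector z, let T be a set of k vertices of largest total weight and S_T
   the copy of S_{n,k} whose clique is T.  The quadratic form of a k-degenerate graph at z is at
   most that of S_T: deleting a vertex v of degree at most k in the support of z costs 2 z_v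
   times the weight of at most k vertices, which S_T gives back (induction on the support,
   together with an exchange argument showing that T maximizes the form of S_K over k-sets K).
   By Cauchy-Schwarz on T and on its complement, the form of S_T is at most mu |z|^2, where mu
   is the spectral radius of S_{n,k}.  Applied to |x| for an eigenvector x this gives
   mu(G) <= mu.  In case of equality |x| is positive and constant on T and off T, strictly
   larger on T unless T misses at most one vertex; comparing the edge counts of G and S_T,
   plain and weighted by |x|, then forces G = S_T. *)

Section QuadraticForm.
Variables (R : comNzRingType) (n : nat).
Implicit Types (z : 'I_n -> R) (A K : {set 'I_n}) (r : rel 'I_n).

Definition qform r z := \sum_i \sum_j (r i j)%:R * (z i * z j).

Definition S_on K : rel 'I_n := fun i j => (i != j) && ((i \in K) || (j \in K)).

Definition sum_on z A := \sum_(i in A) z i.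
Definition sqr_on z A := \sum_(i in A) z i ^+ 2.

Lemma S_on_sym K : symmetric (S_on K).
Proof. by move=> i j; rewrite /S_on eq_sym orbC. Qed.

Lemma S_on_irr K : irreflexive (S_on K).
Proof. by move=> i; rewrite /S_on eqxx. Qed.

Lemma sum_mem_mul (F : 'I_n -> R) A : \sum_(i in A) F i = \sum_i (i \in A)%:R * F i.
Proof. by rewrite big_mkcond; apply: eq_bigr => i _; case: (i \in A); rewrite ?mul1r ?mul0r. Qed.

Lemma sum_eq_mul (F : 'I_n -> R) v : \sum_j (j == v)%:R * F j = F v.
Proof. by rewrite (bigD1 v) //= eqxx mul1r big1 ?addr0 // => j /negPf ->; rewrite mul0r. Qed.

Lemma sum_on_setC z K : \sum_i z i = sum_on z K + sum_on z (~: K).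
Proof.
rewrite (bigID (mem K)) /=; congr (_ + _).
by apply: eq_bigl => i; rewrite inE.
Qed.

Lemma sum_on_swap z K a b : b \in K -> a \notin K ->
  sum_on z (a |: (K :\ b)) = sum_on z K - z b + z a.
Proof.
move=> bK aK; rewrite /sum_on big_setU1 /=; last by rewrite inE negb_and aK orbT.
by rewrite (big_setD1 b bK) /=; ring.
Qed.

Lemma qform_S_on K z :
  qform (S_on K) z = 2 * (\sum_i z i) * sum_on z K - sum_on z K ^+ 2 - sqr_on z K.
Proof.
have S_onE i j : (S_on K i j)%:R = (i \in K)%:R + (j \in K)%:R
    - (i \in K)%:R * (j \in K)%:R - (j == i)%:R * (i \in K)%:R :> R.
  rewrite /S_on eq_sym; case: eqP => [->|_]; case: (i \in K); case: (j \in K);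
    rewrite /= ?mulr1n ?mulr0n; ring.
have row i : \sum_j (S_on K i j)%:R * (z i * z j) =
    (i \in K)%:R * z i * \sum_j z j + z i * sum_on z K
    - (i \in K)%:R * z i * sum_on z K - (i \in K)%:R * z i ^+ 2.
  under eq_bigr => j _ do rewrite S_onE.
  rewrite (_ : \sum_j _ = \sum_j ((i \in K)%:R * z i * z j
      + z i * ((j \in K)%:R * z j) - (i \in K)%:R * z i * ((j \in K)%:R * z j)
      - (j == i)%:R * ((i \in K)%:R * z i * z j))); last by apply: eq_bigr => j _; ring.
  by rewrite !sumrB big_split /= sum_eq_mul -!mulr_sumr /sum_on -!sum_mem_mul; ring.
rewrite /qform; under eq_bigr => i _ do rewrite row.
rewrite !sumrB big_split /= -!mulr_suml /sum_on /sqr_on -!sum_mem_mul.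
by rewrite (sum_mem_mul (fun i => z i ^+ 2)); ring.
Qed.

Lemma qform_zero_at r z v : symmetric r -> irreflexive r ->
  qform r z = qform r (fun i => if i == v then 0 else z i)
    + 2 * z v * \sum_j (r v j)%:R * (if j == v then 0 else z j).
Proof.
move=> sym irr; set z' := fun i => if i == v then 0 else z i.
have zE i : z i = z' i + (i == v)%:R * z v.
  by rewrite /z'; case: eqP => [->|_]; rewrite /= ?mulr1n ?mulr0n; ring.
have row i : \sum_j (r i j)%:R * (z i * z j) =
    \sum_j (r i j)%:R * (z' i * z' j) + (i == v)%:R * (z v * \sum_j (r i j)%:R * z' j)
    + z' i * z v * (r i v)%:R + (i == v)%:R * (z v * z v * (r i v)%:R).
  rewrite (_ : \sum_j _ = \sum_j ((r i j)%:R * (z' i * z' j)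
      + (i == v)%:R * (z v * ((r i j)%:R * z' j))
      + (j == v)%:R * (z' i * z v * (r i j)%:R)
      + (j == v)%:R * ((i == v)%:R * (z v * z v * (r i j)%:R)))); last first.
    apply: eq_bigr => j _; rewrite (zE i) (zE j).
    by case: (j == v); case: (i == v); rewrite /= ?mulr1n ?mulr0n; ring.
  by rewrite !big_split /= !sum_eq_mul -!mulr_sumr.
rewrite /qform; under eq_bigr => i _ do rewrite row.
rewrite !big_split /= !sum_eq_mul irr /= ?mulr0n ?mulr0 ?addr0.
have -> : \sum_i z' i * z v * (r i v)%:R = z v * \sum_j (r v j)%:R * z' j.
  by rewrite mulr_sumr; apply: eq_bigr => i _; rewrite sym; ring.
ring.
Qed.

Lemma qform0 r z : (forall i, z i = 0) -> qform r z = 0.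
Proof.
by move=> z0; rewrite /qform big1 // => i _; rewrite big1 // => j _; rewrite z0 mul0r mulr0.
Qed.

Lemma qformB r1 r2 z : qform r2 z - qform r1 z =
  \sum_u \sum_v ((r2 u v)%:R - (r1 u v)%:R) * (z u * z v).
Proof.
rewrite /qform -sumrB; apply: eq_bigr => u _; rewrite -sumrB.
by apply: eq_bigr => v _; rewrite mulrBl.
Qed.

End QuadraticForm.

Lemma card_superset (T : finType) (A : {set T}) m :
  (#|A| <= m <= #|T|)%N -> exists2 B : {set T}, A \subset B & #|B| = m.
Proof.
move: {2}(m - #|A|)%N (erefl (m - #|A|)%N) => d.
elim: d A => [|d IH] A dE /andP [Am mT]; first by exists A => //; lia.
have /card_gt0P [x] : (0 < #|~: A|)%N by have := cardsC A; lia.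
rewrite inE => xA.
have [B xAB Bm] : exists2 B : {set T}, x |: A \subset B & #|B| = m.
  by apply: IH; rewrite ?cardsU1 xA; lia.
by exists B => //; apply: subset_trans xAB; apply: subsetUr.
Qed.

Section NonnegativeWeights.
Variables (R : realFieldType) (n : nat).
Implicit Types (z : 'I_n -> R) (A K : {set 'I_n}).

Lemma sum_on_subset z A K : (forall i, 0 <= z i) -> A \subset K -> sum_on z A <= sum_on z K.
Proof.
move=> z_ge0 /subsetP AK; rewrite /sum_on !(sum_mem_mul z); apply: ler_sum => i _.
case iA: (i \in A); first by rewrite (AK i iA).
by rewrite mul0r; case: (i \in K); rewrite ?mul1r ?mul0r.
Qed.

Lemma sum_on_const z A c : {in A, forall i, z i = c} -> sum_on z A = #|A|%:R * c.
Proof. by move=> zA; rewrite /sum_on (eq_bigr (fun _ => c)) ?sumr_const ?mulr_natl. Qed.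

Lemma sum_sqr_diff_on z A : \sum_(i in A) \sum_(j in A) (z i - z j) ^+ 2 =
  2 * (#|A|%:R * sqr_on z A - sum_on z A ^+ 2).
Proof.
have row i : \sum_(j in A) (z i - z j) ^+ 2 =
    #|A|%:R * z i ^+ 2 + sqr_on z A - 2 * (z i * sum_on z A).
  rewrite (eq_bigr (fun j => z i ^+ 2 + z j ^+ 2 - 2 * (z i * z j))); last by move=> j _; ring.
  rewrite !sumrB big_split /= sumr_const -!mulr_sumr -mulr_natl.
  by rewrite /sum_on /sqr_on; ring.
under eq_bigr => i _ do rewrite row.
rewrite !sumrB big_split /= sumr_const -!mulr_sumr -mulr_suml -mulr_natl.
by rewrite /sum_on /sqr_on; ring.
Qed.

Lemma sum_on_sqr_le z A : sum_on z A ^+ 2 <= #|A|%:R * sqr_on z A.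
Proof.
have : 0 <= \sum_(i in A) \sum_(j in A) (z i - z j) ^+ 2.
  by apply: sumr_ge0 => i _; apply: sumr_ge0 => j _; apply: sqr_ge0.
by rewrite sum_sqr_diff_on pmulr_rge0 // subr_ge0.
Qed.

Lemma sum_on_sqr_eq z A : #|A|%:R * sqr_on z A = sum_on z A ^+ 2 ->
  {in A &, forall i j, z i = z j}.
Proof.
move=> CS_eq i j iA jA; have := sum_sqr_diff_on z A; rewrite CS_eq subrr mulr0.
have row_ge0 i' : 0 <= \sum_(j' in A) (z i' - z j') ^+ 2.
  by apply: sumr_ge0 => j' _; apply: sqr_ge0.
move=> /(psumr_eq0P (fun i' _ => row_ge0 i')) /(_ i iA).
move=> /(psumr_eq0P (fun j' _ => sqr_ge0 _)) /(_ j jA) /eqP.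
by rewrite sqrf_eq0 subr_eq0 => /eqP.
Qed.

End NonnegativeWeights.

Section HeaviestSet.
Variables (R : realFieldType) (n k : nat).
Implicit Types (z : 'I_n -> R) (K N T : {set 'I_n}).

Definition heaviest z T := #|T| = k /\ forall K, #|K| = k -> sum_on z K <= sum_on z T.

Lemma exists_heaviest z : (k <= n)%N -> exists T, heaviest z T.
Proof.
move=> kn.
have [K0 _ K0k] : exists2 K0 : {set 'I_n}, set0 \subset K0 & #|K0| = k.
  by apply: card_superset; rewrite cards0 card_ord kn.
have K0k' : #|K0| == k by apply/eqP.
have [T /eqP Tk Tmax] := @arg_maxP _ _ _ K0 (fun K => #|K| == k) (sum_on z) K0k'.
by exists T; split => // K Kk; apply: Tmax; apply/eqP.
Qed.

Lemma card_swap K a b : b \in K -> a \notin K -> #|a |: (K :\ b)| = #|K|.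
Proof. by move=> bK aK; rewrite cardsU1 inE negb_and aK orbT (cardsD1 b K) bK; lia. Qed.

Lemma heaviest_ge z T a b : heaviest z T -> a \in T -> b \notin T -> z b <= z a.
Proof.
move=> [Tk Tmax] aT bT; have := Tmax _ (etrans (card_swap aT bT) Tk).
by rewrite sum_on_swap //; lra.
Qed.

Lemma sum_on_le_heaviest z T N : (k <= n)%N -> (forall i, 0 <= z i) -> heaviest z T ->
  (#|N| <= k)%N -> sum_on z N <= sum_on z T.
Proof.
move=> kn z_ge0 [_ Tmax] Nk.
have [K NK Kk] : exists2 K : {set 'I_n}, N \subset K & #|K| = k.
  by apply: card_superset; rewrite Nk card_ord kn.
by apply: le_trans (Tmax _ Kk); apply: sum_on_subset.
Qed.

Lemma qform_S_on_swap_le z K a b : (forall i, 0 <= z i) -> b \in K -> a \notin K ->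
  z b <= z a -> qform (S_on K) z <= qform (S_on (a |: (K :\ b))) z.
Proof.
move=> z_ge0 bK aK ba; rewrite !qform_S_on /sqr_on -/(sum_on _ _) -/(sum_on _ _).
rewrite !sum_on_swap //.
have aC : a \in ~: K by rewrite inE.
have a_le : z a <= \sum_i z i - sum_on z K.
  rewrite (sum_on_setC z K) addrC addKr /sum_on (big_setD1 a aC) /= lerDl.
  exact: sumr_ge0.
have : 0 <= (z a - z b) * (\sum_i z i - sum_on z K - z a).
  by apply: mulr_ge0; rewrite subr_ge0.
nra.
Qed.

Lemma qform_S_on_le_heaviest z T K : (forall i, 0 <= z i) -> heaviest z T ->
  #|K| = k -> qform (S_on K) z <= qform (S_on T) z.
Proof.
move=> z_ge0 hT; have Tk := hT.1; move: {2}#|K :\: T| (erefl #|K :\: T|) => m.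
elim: m K => [|m IH] K KDm Kk.
  have KT : K \subset T by rewrite -setD_eq0 -cards_eq0 KDm.
  by have /eqP -> : K == T by rewrite eqEcard KT Tk Kk /=.
have /card_gt0P [b] : (0 < #|K :\: T|)%N by rewrite KDm.
rewrite inE => /andP [bT bK].
have /card_gt0P [a] : (0 < #|T :\: K|)%N.
  by have := cardsD T K; have := cardsD K T; rewrite setIC Tk Kk => <- ->; rewrite KDm.
rewrite inE => /andP [aK aT].
apply: le_trans (qform_S_on_swap_le z_ge0 bK aK (heaviest_ge hT aT bT)) _.
apply: IH; last by rewrite card_swap.
have -> : (a |: (K :\ b)) :\: T = (K :\: T) :\ b.
  apply/setP => x; rewrite !inE; case: (eqVneq x a) => [->|_] /=.
    by rewrite aT (negPf aK) !andbF.
  by case: (x != b); case: (x \in K); case: (x \in T).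
by move: KDm; rewrite (cardsD1 b (K :\: T)) inE bT bK /=; lia.
Qed.

End HeaviestSet.

Section DegenerateGraph.
Variables (R : realFieldType) (n k : nat) (e : rel 'I_n).
Hypotheses (kn : (k <= n)%N) (e_sym : symmetric e) (e_irr : irreflexive e).
Hypothesis e_deg : degenerate k e.
Implicit Types (z : 'I_n -> R) (A T : {set 'I_n}).

Lemma row_le_heaviest z T A v : (forall i, 0 <= z i) -> z v = 0 -> heaviest k z T ->
  {in ~: A, forall u, z u = 0} -> (#|[set u in A | e v u]| <= k)%N ->
  \sum_j (e v j)%:R * z j <= \sum_j (S_on T v j)%:R * z j.
Proof.
move=> z_ge0 zv hT zA Nk; apply: (@le_trans _ _ (sum_on z [set u in A | e v u])).
  rewrite /sum_on sum_mem_mul; apply: ler_sum => j _; rewrite inE.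
  case: (e v j); rewrite ?andbT ?andbF ?mul0r //=.
  by case jA: (j \in A); rewrite ?mul1r ?mul0r // zA ?inE ?jA.
apply: le_trans (sum_on_le_heaviest kn z_ge0 hT Nk) _.
rewrite /sum_on sum_mem_mul; apply: ler_sum => j _.
rewrite /S_on; case: (eqVneq v j) => [<-|vj]; first by rewrite zv !mulr0.
by case: (j \in T); rewrite ?orbT ?mul0r ?mulr_ge0 ?ler0n.
Qed.

Lemma qform_degenerate_le z T : (forall i, 0 <= z i) -> heaviest k z T ->
  qform e z <= qform (S_on T) z.
Proof.
move: {2}#|[set i | z i != 0]| (leqnn #|[set i | z i != 0]|) => m.
elim: m z T => [|m IH] z T Am z_ge0 hT; set A := [set i | z i != 0] in Am;
  have zA : {in ~: A, forall u, z u = 0} by move=> u; rewrite !inE negbK => /eqP.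
all: have [A0|An0] := eqVneq A set0;
  first by rewrite !qform0 // => i; apply: zA; rewrite A0 setC0 inE.
  by move: Am; rewrite leqn0 cards_eq0 (negPf An0).
have [v vA dv] := e_deg An0 (fun _ _ h => h).
set z' := fun i => if i == v then 0 else z i.
have z'_ge0 i : 0 <= z' i by rewrite /z'; case: eqP.
have z'A : {in ~: A, forall u, z' u = 0} by move=> u uA; rewrite /z' zA //; case: eqP.
have [T' hT'] := exists_heaviest z' kn.
have A'm : (#|[set i | z' i != 0%R]| <= m)%N.
  have -> : [set i | z' i != 0%R] = A :\ v.
    by apply/setP => i; rewrite !inE /z'; case: (eqVneq i v) => [->|] /=; rewrite ?eqxx.
  by move: Am; rewrite (cardsD1 v A) vA.
rewrite (qform_zero_at z v e_sym e_irr).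
apply: le_trans _ (qform_S_on_le_heaviest z_ge0 hT hT'.1).
rewrite (qform_zero_at z v (S_on_sym T') (S_on_irr T')).
apply: lerD; first exact: IH hT'.
apply: ler_wpM2l; first by rewrite mulr_ge0.
by apply: (row_le_heaviest z'_ge0 _ hT' z'A dv); rewrite /z' eqxx.
Qed.

End DegenerateGraph.

Section WeightedCount.
Variables (R : realFieldType) (n : nat).

Lemma psumr2_le0 (F : 'I_n -> 'I_n -> R) : (forall u v, 0 <= F u v) ->
  \sum_u \sum_v F u v <= 0 -> forall u v, F u v = 0.
Proof.
move=> F_ge0 F_le0 u v; have row_ge0 u' : 0 <= \sum_v' F u' v' by apply: sumr_ge0.
have S0 : \sum_u \sum_v F u v = 0 by apply/eqP; rewrite eq_le F_le0 sumr_ge0.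
have row0 := @psumr_eq0P _ _ _ _ (fun u' _ => row_ge0 u') S0 u isT.
exact: (@psumr_eq0P _ _ _ _ (fun v' _ => F_ge0 u v') row0 v isT).
Qed.

(* Lowering every weight by [m] makes each term of the weighted count nonnegative, while the
   total becomes [- m] times the plain count; hence every term vanishes. *)
Lemma eq_rel_of_weighted_sums (s e : rel 'I_n) (y : 'I_n -> R) (m : R) :
  0 <= m -> (forall u, 0 < y u) ->
  (forall u v, s u v -> m <= y u * y v) ->
  (forall u v, e u v -> ~~ s u v -> y u * y v < m) ->
  0 <= \sum_u \sum_v ((s u v)%:R - (e u v)%:R : R) ->
  \sum_u \sum_v ((s u v)%:R - (e u v)%:R) * (y u * y v) = 0 ->
  s =2 e.
Proof.
move=> m_ge0 y_gt0 s_ge e_lt count_ge0 wsum0.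
set D := fun u v => (s u v)%:R - (e u v)%:R : R.
have F_ge0 u v : 0 <= D u v * (y u * y v - m).
  rewrite /D; case suv: (s u v); case euv: (e u v); rewrite ?subrr ?mul0r //=.
    by rewrite subr0 mul1r subr_ge0 s_ge.
  by rewrite sub0r mulN1r oppr_ge0 subr_le0 ltW // e_lt ?suv.
have F0 : forall u v, D u v * (y u * y v - m) = 0.
  apply: psumr2_le0 => //.
  under eq_bigr => u _ do under eq_bigr => v _ do rewrite mulrBr.
  under eq_bigr => u _ do rewrite sumrB.
  rewrite sumrB wsum0 sub0r oppr_le0.
  under eq_bigr => u _ do rewrite -mulr_suml.
  by rewrite -mulr_suml mulr_ge0.
have es u v : e u v -> s u v.
  move=> euv; apply: contraT => nsuv; move: (F0 u v); rewrite /D euv (negPf nsuv) /=.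
  by move=> /eqP; rewrite sub0r mulN1r oppr_eq0 subr_eq0 (lt_eqF (e_lt _ _ euv nsuv)).
have D_ge0 u v : 0 <= D u v * (y u * y v).
  rewrite /D; case euv: (e u v); first by rewrite (es _ _ euv) subrr mul0r.
  by rewrite subr0 mulr_ge0 ?ler0n // mulr_ge0 // ltW.
have wsum_le0 : \sum_u \sum_v D u v * (y u * y v) <= 0 by rewrite wsum0.
move=> u v; have := psumr2_le0 D_ge0 wsum_le0 u v.
move/eqP; rewrite mulf_eq0 mulf_eq0 !(gt_eqF (y_gt0 _)) !orbF /D subr_eq0.
by case: (s u v); case: (e u v) => //= /eqP; lra.
Qed.

End WeightedCount.

Section CrossTerm.
Variable R : realFieldType.

Lemma cross_termE (K N mu t s b p q : R) : mu * t = K * N ->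
  K * t * (t * p + mu * q - 2 * b * s) =
  t ^+ 2 * (K * p - s ^+ 2) + K ^+ 2 * (N * q - b ^+ 2) + (t * s - K * b) ^+ 2.
Proof.
move=> mutE; apply/eqP; rewrite -subr_eq0.
have -> : K * t * (t * p + mu * q - 2 * b * s) -
    (t ^+ 2 * (K * p - s ^+ 2) + K ^+ 2 * (N * q - b ^+ 2) + (t * s - K * b) ^+ 2)
    = K * q * (mu * t - K * N) by ring.
by rewrite mutE subrr mulr0.
Qed.

Lemma cross_term_ge0 (K N mu t s b p q : R) : 0 <= K -> 0 <= t -> 0 <= mu ->
  0 <= p -> 0 <= q -> mu * t = K * N -> s ^+ 2 <= K * p -> b ^+ 2 <= N * q ->
  0 <= t * p + mu * q - 2 * b * s.
Proof.
move=> K_ge0 t_ge0 mu_ge0 p_ge0 q_ge0 mutE sp bq.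
have sqr_le0 (x : R) : x ^+ 2 <= 0 -> x = 0.
  by move=> x2; apply/eqP; rewrite -sqrf_eq0 eq_le x2 sqr_ge0.
have [K0|K_neq0] := eqVneq K 0.
  have s0 : s = 0 by apply: sqr_le0; rewrite K0 mul0r in sp.
  by rewrite s0 mulr0 subr0 addr_ge0 ?mulr_ge0.
have [t0|t_neq0] := eqVneq t 0.
  have N0 : N = 0.
    by move: mutE; rewrite t0 mulr0 => /esym/eqP; rewrite mulf_eq0 (negPf K_neq0) => /eqP.
  have b0 : b = 0 by apply: sqr_le0; rewrite N0 mul0r in bq.
  by rewrite b0 t0 mulr0 !mul0r add0r subr0 mulr_ge0.
have Kt_gt0 : 0 < K * t by rewrite mulr_gt0 // lt_def ?K_neq0 ?t_neq0.
rewrite -(pmulr_rge0 _ Kt_gt0) (cross_termE _ _ _ _ mutE).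
by rewrite !addr_ge0 ?sqr_ge0 // mulr_ge0 ?sqr_ge0 // subr_ge0.
Qed.

Lemma cross_term_eq0 (K N mu t s b p q : R) : 0 < K ->
  mu * t = K * N -> s ^+ 2 <= K * p -> b ^+ 2 <= N * q ->
  t * p + mu * q - 2 * b * s = 0 -> K * p = s ^+ 2 ->
  N * q = b ^+ 2 /\ t * s = K * b.
Proof.
move=> K_gt0 mutE sp bq cross0 Kp_eq; have K_ge0 := ltW K_gt0.
have := cross_termE s b p q mutE.
rewrite cross0 Kp_eq subrr !mulr0 add0r => /esym/eqP.
rewrite paddr_eq0 ?sqr_ge0 ?mulr_ge0 ?sqr_ge0 ?subr_ge0 //.
rewrite mulf_eq0 sqrf_eq0 (gt_eqF K_gt0) sqrf_eq0 !subr_eq0 /=.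
by move=> /andP [/eqP -> /eqP ->].
Qed.

End CrossTerm.

Section SpectralRadiusOfS.
Variables (R : rcfType) (n k : nat).

(* The largest root of [x^2 = (k - 1) x + k (n - k)], the spectral radius of [S_{n,k}]. *)
Definition muS : R :=
  (k%:R - 1 + Num.sqrt ((k%:R - 1) ^+ 2 + 4 * (k%:R * (n - k)%:R))) / 2.

Local Notation t := (muS - k%:R + 1).

Lemma muS_bounds : 0 <= muS /\ 0 <= t /\ muS * t = k%:R * (n - k)%:R.
Proof.
set d : R := k%:R - 1; set c : R := k%:R * (n - k)%:R.
have c_ge0 : 0 <= c by rewrite mulr_ge0 ?ler0n.
set r := Num.sqrt (d ^+ 2 + 4 * c).
have r2 : r ^+ 2 = d ^+ 2 + 4 * c by rewrite sqr_sqrtr // addr_ge0 ?sqr_ge0 ?mulr_ge0.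
have dr : `|d| <= r by rewrite -sqrtr_sqr ler_wsqrtr // lerDl mulr_ge0.
have dr1 : d <= r := le_trans (ler_norm d) dr.
have dr2 : - d <= r by rewrite (le_trans _ dr) // -normrN ler_norm.
have kE : k%:R = d + 1 by rewrite /d; ring.
rewrite /muS -/d -/c -/r kE.
do 2 (split; first lra).
have -> : (d + r) / 2 * ((d + r) / 2 - (d + 1) + 1) = (r ^+ 2 - d ^+ 2) / 4 by field.
by rewrite r2; field.
Qed.

Lemma muS_sqr : muS ^+ 2 = (k%:R - 1) * muS + k%:R * (n - k)%:R.
Proof. by have [_ [_ <-]] := muS_bounds; ring. Qed.

Lemma muS_gt0 : (0 < k)%N -> (1 < n)%N -> 0 < muS.
Proof.
move=> k_gt0 n_gt1; have [mu_ge0 [t_ge0 mutE]] := muS_bounds.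
have [kn|nk] := ltnP k n.
  have mut_gt0 : 0 < muS * t by rewrite mutE mulr_gt0 // ltr0n ?subn_gt0.
  rewrite lt_def mu_ge0 andbT; apply/eqP => mu0.
  by move: mut_gt0; rewrite mu0 mul0r ltxx.
have : 1 <= k%:R :> R by rewrite ler1n.
have : 2%:R <= k%:R :> R by rewrite ler_nat; lia.
lra.
Qed.

Lemma muS_shift_lt : (0 < k)%N -> (2 <= n - k)%N -> t < (n - k)%:R.
Proof.
move=> k_gt0 nk2; have [mu_ge0 [t_ge0 mutE]] := muS_bounds.
have : 2%:R <= (n - k)%:R :> R by rewrite ler_nat.
have : 1 <= k%:R :> R by rewrite ler1n.
nra.
Qed.

Section CliqueBound.
Variable T : {set 'I_n}.
Hypothesis Tk : #|T| = k.
Implicit Type x : 'I_n -> R.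

Lemma card_setC_clique : #|~: T| = (n - k)%N.
Proof. by have := cardsC T; rewrite card_ord Tk; lia. Qed.

Lemma qform_S_on_slack x : muS * \sum_i x i ^+ 2 - qform (S_on T) x =
  (k%:R * sqr_on x T - sum_on x T ^+ 2) +
  (t * sqr_on x T + muS * sqr_on x (~: T) - 2 * sum_on x (~: T) * sum_on x T).
Proof.
rewrite qform_S_on (sum_on_setC x T) (sum_on_setC (fun i => x i ^+ 2) T).
by rewrite /sqr_on /sum_on /=; ring.
Qed.

Lemma cross_term_clique_ge0 x :
  0 <= t * sqr_on x T + muS * sqr_on x (~: T) - 2 * sum_on x (~: T) * sum_on x T.
Proof.
have [mu_ge0 [t_ge0 mutE]] := muS_bounds.
apply: (cross_term_ge0 (K := k%:R) (N := (n - k)%:R)) => //; rewrite ?sumr_ge0 //.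
- by move=> i _; apply: sqr_ge0.
- by move=> i _; apply: sqr_ge0.
- by rewrite -Tk sum_on_sqr_le.
- by rewrite -card_setC_clique sum_on_sqr_le.
Qed.

Lemma qform_S_on_le_muS x : qform (S_on T) x <= muS * \sum_i x i ^+ 2.
Proof.
rewrite -subr_ge0 qform_S_on_slack addr_ge0 ?cross_term_clique_ge0 //.
by rewrite subr_ge0 -Tk sum_on_sqr_le.
Qed.

Lemma qform_S_on_eq_muS x : (0 < k)%N -> qform (S_on T) x = muS * \sum_i x i ^+ 2 ->
  [/\ k%:R * sqr_on x T = sum_on x T ^+ 2,
      (n - k)%:R * sqr_on x (~: T) = sum_on x (~: T) ^+ 2 &
      t * sum_on x T = k%:R * sum_on x (~: T)].
Proof.
move=> k_gt0 qE; have [_ [_ mutE]] := muS_bounds.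
have := qform_S_on_slack x; rewrite qE subrr => /esym/eqP.
have CS_T : 0 <= k%:R * sqr_on x T - sum_on x T ^+ 2 by rewrite subr_ge0 -Tk sum_on_sqr_le.
rewrite paddr_eq0 ?cross_term_clique_ge0 // => /andP [/eqP CS0 /eqP cross0].
have CS_eq : k%:R * sqr_on x T = sum_on x T ^+ 2 by apply/eqP; rewrite -subr_eq0 CS0.
have k_gt0' : 0 < k%:R :> R by rewrite ltr0n.
have CST_le := sum_on_sqr_le x T; have CSC_le := sum_on_sqr_le x (~: T).
rewrite Tk in CST_le; rewrite card_setC_clique in CSC_le.
by have [CSC ratio] := cross_term_eq0 k_gt0' mutE CST_le CSC_le cross0 CS_eq.
Qed.

End CliqueBound.

Lemma extremal_profile (y : 'I_n -> R) (T : {set 'I_n}) :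
  (0 < k)%N -> (forall i, 0 <= y i) -> (exists i, y i != 0) -> heaviest k y T ->
  qform (S_on T) y = muS * \sum_i y i ^+ 2 ->
  exists a c : R, [/\ forall u, 0 < y u, {in T, forall u, y u = a}, 0 <= c,
    forall v, c <= y v & forall u v, u \notin T -> v \notin T -> u != v -> y u * y v < a * c].
Proof.
move=> k_gt0 y_ge0 [i1 yi1] hT qE; have Tk := hT.1.
have [CST CSC ratio] := qform_S_on_eq_muS Tk k_gt0 qE.
rewrite -Tk in CST; rewrite -(card_setC_clique Tk) in CSC.
have /card_gt0P [i0 i0T] : (0 < #|T|)%N by rewrite Tk.
set a := y i0.
have yT : {in T, forall u, y u = a} by move=> u uT; apply: (sum_on_sqr_eq CST).
have [C0|[j0 j0C]] := set_0Vmem (~: T).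
  have allT u : u \in T by apply/negPn; rewrite -in_setC C0 inE.
  have a_gt0 : 0 < a by rewrite -(yT i1 (allT i1)) lt_def yi1 y_ge0.
  exists a, a; split => // [u|||u]; rewrite ?yT ?allT //; first exact: ltW.
  by move=> v; rewrite yT ?allT.
set c := y j0.
have yC : {in ~: T, forall u, y u = c} by move=> u uC; apply: (sum_on_sqr_eq CSC).
have [mu_ge0 [t_ge0 mutE]] := muS_bounds.
have nk_gt0 : (0 < n - k)%N by rewrite -(card_setC_clique Tk); apply/card_gt0P; exists j0.
have ratio' : t * a = (n - k)%:R * c.
  move: ratio; rewrite (sum_on_const yT) (sum_on_const yC) Tk (card_setC_clique Tk).
  by rewrite mulrCA => /(mulfI (lt0r_neq0 _)); apply; rewrite ltr0n.
have t_gt0 : 0 < t.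
  rewrite lt_def t_ge0 andbT; apply/eqP => t0; move: mutE; rewrite t0 mulr0 => /esym/eqP.
  by rewrite mulf_eq0 !pnatr_eq0 !eqn0Ngt k_gt0 nk_gt0.
have c_ge0 : 0 <= c := y_ge0 j0.
have c_gt0 : 0 < c.
  rewrite lt_def c_ge0 andbT; apply/eqP => c0; move: ratio'; rewrite c0 mulr0 => /eqP.
  rewrite mulf_eq0 (gt_eqF t_gt0) /= => /eqP a0; move: yi1.
  by case: (boolP (i1 \in T)) => i1T; [rewrite yT ?a0 | rewrite yC ?inE ?c0]; rewrite ?eqxx.
have c_le_a : c <= a by apply: heaviest_ge hT i0T _; rewrite -in_setC.
have a_gt0 : 0 < a := lt_le_trans c_gt0 c_le_a.
have y_ge_c v : c <= y v by case: (boolP (v \in T)) => vT; [rewrite yT | rewrite yC ?inE].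
exists a, c; split => // [u|u v uT vT uv]; first exact: lt_le_trans (y_ge_c u).
have nk2 : (2 <= n - k)%N.
  by rewrite -(card_setC_clique Tk); apply/card_gt1P; exists u, v; rewrite !inE.
have c_lt_a : c < a.
  rewrite -(ltr_pM2l (_ : 0 < (n - k)%:R)) ?ltr0n // -ratio' ltr_pM2r //.
  exact: muS_shift_lt.
by rewrite !yC ?inE // ltr_pM2r.
Qed.

End SpectralRadiusOfS.

Lemma S_on_iso_S_graph n k (T : {set 'I_n}) : #|T| = k -> graph_iso (S_on T) (S_graph n k).
Proof.
move=> Tk; set s := enum T ++ enum (~: T).
have s_mem u : u \in s by rewrite mem_cat !mem_enum inE orbN.
have size_s : size s = n by rewrite size_cat -!cardE cardsC card_ord.
have index_lt u : (index u s < n)%N by rewrite -[X in (_ < X)%N]size_s index_mem.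
pose f u := Ordinal (index_lt u).
have f_inj : injective f by move=> u v [] /(congr1 (nth u s)); rewrite !nth_index.
have f_lt u : (f u < k)%N = (u \in T).
  rewrite /= index_cat mem_enum -cardE Tk; case: ifP => uT; last by lia.
  by rewrite -[X in (_ < X)%N]Tk cardE index_mem mem_enum.
by exists (perm f_inj) => u v; rewrite /S_on /S_graph !permE (inj_eq f_inj) !f_lt.
Qed.

Section ExtremalDegenerate.
Variables (R : rcfType) (n k : nat) (e : rel 'I_n).
Hypotheses (kn : (k <= n)%N) (k_gt0 : (0 < k)%N).
Hypotheses (e_sym : symmetric e) (e_irr : irreflexive e) (e_deg : degenerate k e).

Lemma degenerate_extremal (x : 'I_n -> R) : (exists i, x i != 0) ->
  muS R n k * \sum_i x i ^+ 2 <= qform e x ->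
  exists2 T : {set 'I_n}, #|T| = k & S_on T =2 e.
Proof.
move=> [i1 xi1] mu_le; set y := fun i => `|x i|.
have y_ge0 i : 0 <= y i by apply: normr_ge0.
have [T hT] := exists_heaviest y kn; have Tk := hT.1.
have sqr_y : \sum_i x i ^+ 2 = \sum_i y i ^+ 2.
  by apply: eq_bigr => i _; rewrite /y real_normK ?num_real.
have qxy : qform e x <= qform e y.
  apply: ler_sum => i _; apply: ler_sum => j _; apply: ler_wpM2l => //.
  by rewrite /y -normrM ler_norm.
have qeS := qform_degenerate_le kn e_sym e_irr e_deg y_ge0 hT.
have qSmu := qform_S_on_le_muS Tk y.
rewrite sqr_y in mu_le.
have qS_eq : qform (S_on T) y = muS R n k * \sum_i y i ^+ 2.
  by apply/le_anti; rewrite qSmu /=; lra.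
have qe_eq : qform e y = qform (S_on T) y by apply/le_anti; rewrite qeS /=; lra.
have y_nz : exists i, y i != 0 by exists i1; rewrite normr_eq0.
have [a [c [y_gt0 yT c_ge0 y_ge_c y_lt]]] := extremal_profile k_gt0 y_ge0 y_nz hT qS_eq.
have /card_gt0P [i0 i0T] : (0 < #|T|)%N by rewrite Tk.
have a_gt0 : 0 < a by rewrite -(yT i0 i0T).
exists T => //.
apply: (eq_rel_of_weighted_sums (m := a * c) (mulr_ge0 (ltW a_gt0) c_ge0) y_gt0).
- move=> u v /andP [_ /orP [uT|vT]]; first by rewrite (yT u uT) ler_pM2l.
  by rewrite (yT v vT) [_ * a]mulrC ler_pM2l.
- move=> u v euv; rewrite /S_on negb_and negbK negb_or => /orP [/eqP uv|/andP [uT vT]].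
    by move: euv; rewrite uv e_irr.
  by apply: y_lt => //; apply: contraTneq euv => ->; rewrite e_irr.
- have hT1 : heaviest k (fun _ => 1 : R) T.
    by split => // K Kk; rewrite !(sum_on_const (c := 1)) ?Kk ?Tk.
  have := qform_degenerate_le kn e_sym e_irr e_deg (fun _ => ler01) hT1.
  rewrite -subr_ge0 qformB => /le_trans; apply; apply: ler_sum => u _.
  by apply: ler_sum => v _; rewrite !mulr1.
- by rewrite -qformB qe_eq subrr.
Qed.

End ExtremalDegenerate.

Lemma sorted_le_last (R : realDomainType) (s : seq R) x x0 :
  sorted <%R s -> x \in s -> x <= last x0 s.
Proof.
elim: s x0 => [|a s IH] x0 //= s_sorted; rewrite inE => /orP [/eqP ->|xs].
  have := mem_last a s; rewrite inE => /orP [/eqP ->//|ls].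
  by have /allP /(_ _ ls) /ltW := order_path_min (@lt_trans _ _) s_sorted.
exact: IH (path_sorted s_sorted) xs.
Qed.

Section LargestEigenvalue.
Variables (R : rcfType) (n : nat).
Implicit Type A : 'M[R]_n.

Lemma eigenvalue_le_mu A lam : eigenvalue A lam -> lam <= mu A.
Proof.
rewrite eigenvalue_root_char => lam_root; have p_neq0 := monic_neq0 (char_poly_monic A).
apply: sorted_le_last; first exact: sorted_roots.
by rewrite -(roots_on_rootsR p_neq0) lam_root.
Qed.

Lemma mu0_or_eigenvalue A : mu A = 0 \/ eigenvalue A (mu A).
Proof.
have p_neq0 := monic_neq0 (char_poly_monic A).
have := mem_last 0 (rootsR (char_poly A)); rewrite inE -/(mu A).
case/orP => [/eqP ->|mu_root]; first by left.
right; rewrite eigenvalue_root_char.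
by have := roots_on_rootsR p_neq0 (mu A); rewrite mu_root => /andP [].
Qed.

Lemma qform_eigenvector (r : rel 'I_n) lam (v : 'rV[R]_n) :
  v *m adj_mx R r = lam *: v -> qform r (fun i => v 0 i) = lam * \sum_i v 0 i ^+ 2.
Proof.
move=> vA; have col j : \sum_i (r i j)%:R * v 0 i = lam * v 0 j.
  have := congr1 (fun M : 'M[R]_(1, n) => M 0 j) vA; rewrite !mxE => <-.
  by apply: eq_bigr => i _; rewrite !mxE mulrC.
rewrite /qform exchange_big mulr_sumr; apply: eq_bigr => j _.
rewrite (eq_bigr (fun i => (r i j)%:R * v 0 i * v 0 j)); last by move=> i _; ring.
by rewrite -mulr_suml col; ring.
Qed.

End LargestEigenvalue.

Lemma sum_ord_split (R : nzRingType) n k (c d : R) : (k <= n)%N ->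
  \sum_(i < n) (if (i < k)%N then c else d) = k%:R * c + (n - k)%:R * d.
Proof.
move=> kn; rewrite -(big_mkord xpredT (fun i => if (i < k)%N then c else d)).
rewrite (big_cat_nat (leq0n k) kn) /=.
rewrite (eq_big_nat _ _ (F2 := fun _ => c)); last by move=> i /andP [_ ->].
rewrite [X in _ + X](eq_big_nat _ _ (F2 := fun _ => d)); last first.
  by move=> i /andP [ki _]; rewrite ltnNge ki.
by rewrite !sumr_const_nat subn0 !mulr_natl.
Qed.

Section SpectralBounds.
Variables (R : rcfType) (n k : nat).
Hypotheses (kn : (k <= n)%N) (k_gt0 : (0 < k)%N) (n_gt1 : (1 < n)%N).

Lemma S_graph_eigenvector :
  let w := \row_(i < n) (if (i < k)%N then muS R n k else k%:R) in
  w *m adj_mx R (S_graph n k) = muS R n k *: w.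
Proof.
move=> w; apply/rowP => j; rewrite !mxE; under eq_bigr => i _ do rewrite !mxE.
have wsum := sum_ord_split (muS R n k) k%:R kn.
have [jk|kj] := ltnP j k.
  have adjE i : (S_graph n k i j)%:R = (i != j)%:R :> R by rewrite /S_graph jk orbT andbT.
  under eq_bigr => i _ do rewrite adjE.
  rewrite (bigD1 j) //= eqxx mulr0 add0r.
  rewrite (eq_bigr (fun i : 'I_n => if (i < k)%N then muS R n k else k%:R)); last first.
    by move=> i ij; rewrite ij mulr1.
  move: wsum; rewrite (bigD1 j) //= jk => /(canRL (addKr _)) ->.
  by rewrite -expr2 muS_sqr; ring.
have adjE (i : 'I_n) : (if (i < k)%N then muS R n k else k%:R) * (S_graph n k i j)%:R =
    if (i < k)%N then muS R n k else 0.
  rewrite /S_graph (leq_gtF kj) orbF /=; case: (ltnP i k) => ik /=; last by rewrite andbF mulr0.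
  by rewrite andbT (_ : i != j) ?mulr1 //; apply: contraTneq ik => ->; rewrite -leqNgt.
under eq_bigr => i _ do rewrite adjE.
by rewrite sum_ord_split // mulr0 addr0 mulrC.
Qed.

Lemma muS_le_mu_S_graph : muS R n k <= mu (adj_mx R (S_graph n k)).
Proof.
apply: eigenvalue_le_mu; apply/eigenvalueP.
exists (\row_(i < n) (if (i < k)%N then muS R n k else k%:R)); first exact: S_graph_eigenvector.
have n_gt0 : (0 < n)%N by lia.
apply/eqP => /rowP /(_ (Ordinal n_gt0)); rewrite !mxE /= k_gt0 => /eqP.
by rewrite gt_eqF // muS_gt0.
Qed.

Variable e : rel 'I_n.
Hypotheses (e_sym : symmetric e) (e_irr : irreflexive e) (e_deg : degenerate k e).

Lemma mu_lt_muS : ~ graph_iso e (S_graph n k) -> mu (adj_mx R e) < muS R n k.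
Proof.
move=> not_iso.
have [->|/eigenvalueP [v vA v_neq0]] := mu0_or_eigenvalue (adj_mx R e); first exact: muS_gt0.
rewrite ltNge; apply/negP => mu_le.
have v_nz : exists i, v 0 i != 0.
  apply/existsP; apply: contraR v_neq0; rewrite negb_exists => /forallP v0.
  by apply/eqP/rowP => j; rewrite mxE; apply/eqP; rewrite -[_ == 0]negbK v0.
have sum_ge0 : 0 <= \sum_i v 0 i ^+ 2 by apply: sumr_ge0 => i _; apply: sqr_ge0.
have qform_ge : muS R n k * \sum_i v 0 i ^+ 2 <= qform e (fun i => v 0 i).
  by rewrite (qform_eigenvector vA) ler_wpM2r.
have [T Tk SE] := degenerate_extremal kn k_gt0 e_sym e_irr e_deg v_nz qform_ge.
apply: not_iso; have [s sE] := S_on_iso_S_graph Tk.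
by exists s => u w; rewrite -SE sE.
Qed.

End SpectralBounds.

Lemma degenerate0_nil n (e : rel 'I_n) :
  symmetric e -> degenerate 0 e -> forall u v, e u v = false.
Proof.
move=> e_sym e_deg u v; apply/negP => euv.
have uv_neq0 : [set u; v] != set0 by apply/set0Pn; exists u; rewrite !inE eqxx.
have [w wuv] := e_deg _ _ uv_neq0 (fun _ _ => id).
rewrite leqn0 cards_eq0 => /eqP /setP nbr_w.
case/set2P: wuv nbr_w => -> nbr_w; first by have := nbr_w v; rewrite !inE eqxx orbT euv.
by have := nbr_w u; rewrite !inE eqxx e_sym euv.
Qed.

Theorem theorem1 (R : rcfType) (k n : nat) (e : rel 'I_n) :
  (k <= n)%N -> simple_graph e -> degenerate k e ->
  ~ graph_iso e (S_graph n k) ->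
  mu (adj_mx R e) < mu (adj_mx R (S_graph n k)).
Proof.
move=> kn [e_sym e_irr] e_deg not_iso.
have [k0|k_gt0] := posnP k.
  subst k; case: not_iso; exists 1%g => u v.
  by rewrite (degenerate0_nil e_sym e_deg) !perm1 /S_graph andbF.
have [n_le1|n_gt1] := leqP n 1.
  case: not_iso; exists 1%g => u v; rewrite !perm1.
  have -> : u = v by apply: ord_inj; move: (ltn_ord u) (ltn_ord v); lia.
  by rewrite e_irr /S_graph eqxx.
apply: lt_le_trans (muS_le_mu_S_graph R kn k_gt0 n_gt1).
exact: mu_lt_muS.
Qed.
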